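(* For every pair of integers $k \geqslant 2$ and $\ell \geqslant 0$ there exists a direction-determinate 2DFA with set of states $Q = Q^+ \cup Q^-$, where $|Q^+| = k$ and $|Q^-| = \ell$, which accepts at least one string and whose shortest accepted string has length exactly $\binom{k+\ell}{\ell+1} - 1$.
   Context: A two-way deterministic finite automaton (2DFA) is a quintuple $(\Sigma, Q, q_0, \delta, F)$ where $\Sigma$ is a finite alphabet not containing the end-markers $\vdash$ and $\dashv$, $Q$ is a finite set of states, $q_0 \in Q$ is the initial state, $\delta: Q \times (\Sigma \cup \{\vdash, \dashv\}) \to Q \times \{-1,+1\}$ is a partial transition function, and $F \subseteq Q$ is the set of accepting states. On input $w = a_1 \cdots a_m \in \Sigma^*$ the automaton works on the tape $\vdash a_1 \cdots a_m \dashv$, starting at $\vdash$ in state $q_0$; in state $q$ reading symbol $c$, if $\delta(q,c) = (r,d)$ it enters state $r$ and moves one cell in direction $d$ ($-1$ left, $+1$ right); if $\delta(q,c)$ is undefined it rejects. It accepts $w$ if it ever arrives at $\dashv$ in a state from $F$; it may also loop forever (not accepting). The number of states of the automaton is $|Q|$. A 2DFA is direction-determinate if there is a partition $Q = Q^+ \cup Q^-$, $Q^+ \cap Q^- = \emptyset$, such that every transition $\delta(q,c) = (r,+1)$ has $r \in Q^+$ and every transition $\delta(q,c) = (r,-1)$ has $r \in Q^-$. *)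

From mathcomp Require Import all_boot.
Set Implicit Arguments. Unset Strict Implicit. Unset Printing Implicit Defensive.

(* Tape symbols: the end-markers |- (LEnd), -| (REnd) and the letters of
   Sigma (so Sigma never contains the end-markers). *)
Inductive tsym (Sigma : Type) := LEnd | REnd | Letter of Sigma.
Arguments LEnd {Sigma}. Arguments REnd {Sigma}.

Inductive dir := Left | Right.

Record TwoDFA (Sigma Q : finType) := Mk2DFA {
  q0 : Q;
  delta : Q -> tsym Sigma -> option (Q * dir);
  final : {set Q}
}.

Section Semantics.
Variables (Sigma Q : finType) (A : TwoDFA Sigma Q).

(* Tape |- a_1 ... a_m -| : cell 0 is |-, cell i (1 <= i <= m) is a_i,
   cell m+1 is -|. *)
Definition tape (w : seq Sigma) (i : nat) : tsym Sigma :=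
  if i == 0 then LEnd else nth REnd (map (@Letter Sigma) w) i.-1.

(* One computation step on configuration (state, head position).
   None = the computation halts (undefined transition, which rejects;
   moving off either end of the tape is also treated as halting). *)
Definition step (w : seq Sigma) (c : Q * nat) : option (Q * nat) :=
  let: (q, i) := c in
  match delta A q (tape w i) with
  | None => None
  | Some (r, Right) => if i < (size w).+1 then Some (r, i.+1) else None
  | Some (r, Left) => if 0 < i then Some (r, i.-1) else None
  end.

Fixpoint run (w : seq Sigma) (n : nat) : option (Q * nat) :=
  match n with
  | 0 => Some (q0 A, 0)
  | n'.+1 => match run w n' with None => None | Some c => step w c end
  end.

Definition accepts (w : seq Sigma) : Prop :=
  exists n q, run w n = Some (q, (size w).+1) /\ q \in final A.

Definition dir_determinate_wrt (Qp Qm : {set Q}) : Prop :=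
  [/\ Qp :|: Qm = setT, [disjoint Qp & Qm] &
      forall q c r d, delta A q c = Some (r, d) ->
        (d = Right -> r \in Qp) /\ (d = Left -> r \in Qm)].

Definition direction_determinate : Prop :=
  exists Qp Qm, dir_determinate_wrt Qp Qm.

End Semantics.

From HB Require Import structures.
From mathcomp Require Import all_boot zify.
Set Implicit Arguments. Unset Strict Implicit. Unset Printing Implicit Defensive.

(* Take as letters the nondecreasing (l+1)-tuples over {0, ..., k-1}; there are
   C(k+l, l+1) of them.  Order them linearly by weight first, which extends the
   componentwise order, and write succ for the successor in this order.  Reading
   letter x, the automaton compares x entry by entry with the successor y of the
   previous letter: a + state v is an entry of y, and when x has an entry above v
   at index j+1 (entry 0 above v rejects), a - state j steps back to the previous
   letter to fetch entry j+1 of y.  Hence every letter it passes is componentwise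
   below the successor of its predecessor, so the rank of succ grows by at most
   one per letter.  Acceptance demands that the successor of the last letter be
   the top tuple, forcing at least C(k+l, l+1) - 1 letters, and the chain
   bottom, succ bottom, ... of exactly that length is accepted. *)

Section Reachability.
Variables (Sigma Q : finType) (A : TwoDFA Sigma Q) (w : seq Sigma).

Definition reachable (c : Q * nat) : Prop := exists n, run A w n = Some c.

Lemma reachable_step c c' : reachable c -> step A w c = Some c' -> reachable c'.
Proof. by case=> n hn hc; exists n.+1; rewrite /= hn. Qed.

Lemma reachable_ind (P : Q * nat -> Prop) :
  P (q0 A, 0) -> (forall c c', P c -> step A w c = Some c' -> P c') ->
  forall c, reachable c -> P c.
Proof.
move=> P0 Pstep c [n]; elim: n c => [|n IHn] c /=; first by case=> <-.
by case hn: (run A w n) => [c0|] // hc; apply: Pstep (IHn _ hn) hc.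
Qed.

Lemma acceptsP : accepts A w <-> exists2 q, reachable (q, (size w).+1) & q \in final A.
Proof.
by split=> [[n [q [hn hq]]]|[q [n hn] hq]]; [exists q => //; exists n | exists n, q].
Qed.

Lemma tape_interior x0 p : 0 < p <= size w -> tape w p = Letter (nth x0 w p.-1).
Proof. by case: p => //= p hp; rewrite /tape /= (nth_map x0). Qed.

Lemma tape_right_end : tape w (size w).+1 = REnd.
Proof. by rewrite /tape /= nth_default // size_map. Qed.

Definition move (p : nat) (d : dir) : nat := if d is Right then p.+1 else p.-1.

Lemma step_interior q p : 0 < p <= size w ->
  step A w (q, p) = omap (fun rd => (rd.1, move p rd.2)) (delta A q (tape w p)).
Proof.
case/andP=> p_gt0 p_le; rewrite /step.
by case: (delta A q _) => [[r []]|] //=; rewrite ?p_gt0 ?ltnS ?p_le.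
Qed.

End Reachability.

Section KeyRank.
Variables (T : finType) (key : T -> nat).
Hypothesis key_inj : injective key.

Definition key_rank (x : T) : nat := #|[set y | key y < key x]|.

Definition key_succ (x : T) : T :=
  if [pick y | key x < key y] is Some y0
  then [arg min_(y < y0 | key x < key y) key y] else x.

Lemma key_rank_le x y : key x <= key y -> key_rank x <= key_rank y.
Proof.
move=> le_xy; apply/subset_leq_card/subsetP => z; rewrite !inE => lt_zx.
exact: leq_trans lt_zx le_xy.
Qed.

Lemma key_rank_lt x y : key x < key y -> key_rank x < key_rank y.
Proof.
move=> lt_xy; apply/proper_card/properP; split.
  by apply/subsetP => z; rewrite !inE => lt_zx; apply: ltn_trans lt_zx lt_xy.
by exists x; rewrite !inE ?ltnn.
Qed.

Lemma key_rank_inj : injective key_rank.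
Proof.
move=> x y eq_xy; apply: key_inj.
case: (ltngtP (key x) (key y)) => // /key_rank_lt; by rewrite eq_xy ltnn.
Qed.

Lemma key_rank_min x : (forall y, key x <= key y) -> key_rank x = 0.
Proof.
move=> min_x; apply/eqP; rewrite cards_eq0; apply/eqP/setP => y.
by rewrite !inE ltnNge min_x.
Qed.

Lemma key_rank_max x : (forall y, key y <= key x) -> key_rank x = #|T|.-1.
Proof.
move=> max_x; rewrite /key_rank -(cardsC1 x); apply: eq_card => y; rewrite !inE.
by rewrite ltn_neqAle max_x andbT (inj_eq key_inj).
Qed.

Lemma key_rank_succ x y : key x < key y -> key_rank (key_succ x) = (key_rank x).+1.
Proof.
move=> lt_xy; rewrite /key_succ; case: pickP => [y0 lt_xy0|/(_ y)]; last by rewrite lt_xy.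
case: arg_minnP => [//|s] lt_xs min_s; rewrite /key_rank.
have <- : #|x |: [set z | key z < key x]| = (#|[set z | key z < key x]|).+1.
  by rewrite cardsU1 inE ltnn.
apply: eq_card => z; rewrite !inE; case: (eqVneq z x) => [->|ne_zx] //=.
apply/idP/idP => [lt_zs|/ltn_trans->//].
rewrite ltn_neqAle (inj_eq key_inj) ne_zx leqNgt /=.
by apply: contraTN lt_zs => /min_s; rewrite -leqNgt.
Qed.

Lemma key_rank_succ_le x : key_rank (key_succ x) <= (key_rank x).+1.
Proof.
have [y /key_rank_succ->//|none_above] := pickP (fun y => key x < key y).
by rewrite /key_succ; case: pickP => [y0 /=|_]; rewrite ?none_above.
Qed.

Lemma key_rank_iter x0 t : key_rank x0 = 0 -> t <= #|T|.-1 ->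
  key_rank (iter t key_succ x0) = t.
Proof.
move=> rank_x0; elim: t => // t IHt lt_t; have rank_t := IHt (ltnW lt_t).
have [y above|] := pickP (fun y => key (iter t key_succ x0) < key y).
  by rewrite iterS (key_rank_succ above) rank_t.
move=> none_above; move: lt_t; rewrite -rank_t key_rank_max ?ltnn // => y.
by rewrite leqNgt none_above.
Qed.

End KeyRank.

Section SortedTuples.
Variables n l : nat.
Local Notation K := n.+1.

Definition sorted_tuple := {t : (l.+1).-tuple 'I_K | sorted leq (map val t)}.
HB.instance Definition _ := Finite.on sorted_tuple.

Local Notation N := #|{: sorted_tuple}|.

Lemma card_sorted_tuple : N = 'C(l.+1 + n, l.+1).
Proof. by rewrite card_sig -card_sorted_tuples; apply: eq_card => t; rewrite !inE. Qed.

Definition entry (x : sorted_tuple) (i : 'I_l.+1) : 'I_K := tnth (val x) i.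

Lemma entry_mono x (i j : 'I_l.+1) : i <= j -> entry x i <= entry x j.
Proof.
move=> le_ij; rewrite /entry !(tnth_nth ord0).
have := sorted_leq_nth leq_trans leqnn 0 (valP x).
rewrite size_map size_tuple => /(_ i j); rewrite !inE !ltn_ord => /(_ isT isT le_ij).
by rewrite !(nth_map ord0) ?size_tuple.
Qed.

Lemma entry_inj x y : entry x =1 entry y -> x = y.
Proof. by move=> eq_xy; apply/val_inj/eq_from_tnth. Qed.

Lemma sorted_nseq (a : 'I_K) : sorted leq (map val [tuple of nseq l.+1 a]).
Proof. by rewrite /= map_nseq; elim: l => //= m ->; rewrite leqnn. Qed.

Definition bottom : sorted_tuple := exist _ [tuple of nseq l.+1 ord0] (sorted_nseq ord0).
Definition top : sorted_tuple := exist _ [tuple of nseq l.+1 ord_max] (sorted_nseq ord_max).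

Lemma entry_bottom i : entry bottom i = ord0.
Proof. by rewrite /entry (tnth_nth ord0) nth_nseq ltn_ord. Qed.

Lemma entry_top i : entry top i = ord_max.
Proof. by rewrite /entry (tnth_nth ord0) nth_nseq ltn_ord. Qed.

Lemma entry_le_top x i : entry x i <= entry top i.
Proof. by rewrite entry_top -ltnS. Qed.

Lemma entry0_top x : entry x ord0 = ord_max -> x = top.
Proof.
move=> x0_max; apply: entry_inj => i; apply/val_inj/eqP.
by rewrite eqn_leq entry_le_top entry_top -x0_max entry_mono.
Qed.

Definition weight (x : sorted_tuple) : nat := \sum_i entry x i.

Lemma weight_lt x y : (forall i, entry x i <= entry y i) -> x != y -> weight x < weight y.
Proof.
move=> le_xy; apply: contraNT; rewrite -leqNgt => le_wyx; apply/eqP/entry_inj => i.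
apply/val_inj/eqP; rewrite eqn_leq le_xy /=.
apply: contraLR le_wyx; rewrite -!ltnNge => lt_i.
rewrite /weight (bigD1 i) //= [X in _ < X](bigD1 i) //= -addSn.
by apply: leq_add => //; apply: leq_sum => j _.
Qed.

Definition key (x : sorted_tuple) : nat := weight x * N + enum_rank x.

Lemma key_inj : injective key.
Proof.
move=> x y eq_key; have := congr1 (modn^~ N) eq_key.
by rewrite /key !modnMDl !modn_small // => /val_inj /enum_rank_inj.
Qed.

Lemma key_mono x y : (forall i, entry x i <= entry y i) -> key x <= key y.
Proof.
move=> le_xy; have [->//|ne_xy] := eqVneq x y.
apply: ltnW; rewrite /key; apply: leq_trans (leq_addr _ _).
apply: leq_trans (leq_mul (weight_lt le_xy ne_xy) (leqnn N)).
by rewrite mulSn addnC ltn_add2r.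
Qed.

Local Notation rank := (key_rank key).
Local Notation succ := (key_succ key).

Lemma rank_bottom : rank bottom = 0.
Proof. by apply: key_rank_min => y; apply: key_mono => i; rewrite entry_bottom. Qed.

Lemma rank_top : rank top = N.-1.
Proof. by apply: (key_rank_max key_inj) => y; apply/key_mono/entry_le_top. Qed.

Lemma iter_succ_top : iter N.-1 succ bottom = top.
Proof.
by apply: (key_rank_inj key_inj); rewrite rank_top key_rank_iter ?rank_bottom //; apply: key_inj.
Qed.

End SortedTuples.

Section Automaton.
Variables n l : nat.
Local Notation K := n.+1.
Local Notation Sigma := (sorted_tuple n l).
Local Notation N := #|{: Sigma}|.
Local Notation rank := (key_rank (@key n l)).
Local Notation succ := (key_succ (@key n l)).

Definition state := ('I_K + 'I_l)%type.

Definition first_above (v : 'I_K) (x : Sigma) : nat := find (fun a : 'I_K => v < a) (val x).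

(* [insub j] fails exactly when [first_above v x = l.+1], i.e. no entry of [x] exceeds [v]. *)
Definition transition (q : state) (c : tsym Sigma) : option (state * dir) :=
  match c, q with
  | LEnd, inl _ => Some (inl ord0, Right)
  | Letter x, inl v =>
      match first_above v x with
      | 0 => None
      | j.+1 => if insub j is Some j' then Some (inr j', Left)
                else Some (inl (entry (succ x) ord0), Right)
      end
  | Letter x, inr j => Some (inl (entry (succ x) (lift ord0 j)), Right)
  | _, _ => None
  end.

Definition automaton : TwoDFA Sigma state := Mk2DFA (inl ord0) transition [set inl ord_max].

Variant transition_plus_spec (v : 'I_K) (x : Sigma) : option (state * dir) -> Prop :=
  | TransitionReject of v < entry x ord0 : transition_plus_spec v x None
  | TransitionRight of (forall i, entry x i <= v) :
      transition_plus_spec v x (Some (inl (entry (succ x) ord0), Right))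
  | TransitionLeft (j : 'I_l) of (forall i : 'I_l.+1, i <= j -> entry x i <= v)
      & v < entry x (lift ord0 j) : transition_plus_spec v x (Some (inr j, Left)).

Lemma transition_plusP v x : transition_plus_spec v x (delta automaton (inl v) (Letter x)).
Proof.
rewrite /= /transition /first_above.
set above := fun a : 'I_K => v < a.
have le_before (i : 'I_l.+1) : i < find above (val x) -> entry x i <= v.
  move=> /(before_find ord0) /negbT not_above.
  by rewrite /entry (tnth_nth ord0) leqNgt; exact: not_above.
have gt_at (i : 'I_l.+1) : i = find above (val x) :> nat -> v < entry x i.
  move=> def_i; have /(nth_find ord0) : has above (val x).
    by rewrite has_find -def_i size_tuple.
  by rewrite -def_i /entry (tnth_nth ord0).
case def_f: (find above _) => [|j].
  by constructor; apply: gt_at.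
case: insubP => [j' _ val_j'|ge_jl].
  constructor => [i le_ij|]; last by apply: gt_at; rewrite def_f /= val_j'.
  by apply: le_before; rewrite def_f ltnS -val_j'.
constructor => i; apply: le_before; rewrite def_f.
by apply: leq_trans (ltn_ord i) _; rewrite ltnNge.
Qed.

Section Run.
Variable w : seq Sigma.
Local Notation m := (size w).

Definition letter (p : nat) : Sigma := nth (bottom n l) w p.-1.

(* The letter the automaton expects at position [p.+1]. *)
Definition expected (p : nat) : Sigma := if p is 0 then bottom n l else succ (letter p).

Lemma expected_succ p : expected p.+1 = succ (letter p.+1).
Proof. by []. Qed.

Lemma step_letter q p : p < m ->
  step automaton w (q, p.+1) =
  omap (fun rd => (rd.1, move p.+1 rd.2)) (delta automaton q (Letter (letter p.+1))).
Proof. by move=> lt_pm; rewrite step_interior // (tape_interior (bottom n l)). Qed.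

Definition rank_bounded (b : nat) : Prop := forall i, i <= b -> rank (expected i) <= i.

Lemma rank_bounded0 : rank_bounded 0.
Proof. by move=> i; rewrite leqn0 => /eqP->; rewrite rank_bottom. Qed.

Lemma rank_bounded_succ p : rank_bounded p ->
  (forall i, entry (letter p.+1) i <= entry (expected p) i) -> rank_bounded p.+1.
Proof.
move=> bounded le_letter i; rewrite leq_eqVlt ltnS => /orP[/eqP->|/bounded//].
apply: leq_trans (key_rank_succ_le (@key_inj n l) _) _; rewrite ltnS.
exact: leq_trans (key_rank_le (key_mono le_letter)) (bounded _ (leqnn p)).
Qed.

(* In state [inl v] on letter [p.+1], the entries of that letter up to [v] have
   been checked against the expected letter; in state [inr j] on letter [p],
   entries [0 .. j] of letter [p.+1] have. *)
Definition run_inv (c : state * nat) : Prop :=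
  match c with
  | (inl _, 0) => True
  | (inl v, p.+1) =>
      [/\ p < m, rank_bounded p &
           forall i, entry (letter p.+1) i <= v -> entry (letter p.+1) i <= entry (expected p) i]
      \/ [/\ p = m, rank_bounded m & v = entry (expected m) ord0]
  | (inr j, p) =>
      [/\ p < m, rank_bounded p &
           forall i : 'I_l.+1, i <= j -> entry (letter p.+1) i <= entry (expected p) i]
  end.

Lemma run_inv_enter p (k : 'I_l.+1) : p < m -> rank_bounded p ->
  (forall i : 'I_l.+1, i < k -> entry (letter p.+1) i <= entry (expected p) i) ->
  run_inv (inl (entry (expected p) k), p.+1).
Proof.
move=> lt_pm bounded le_below; left; split=> // i le_i.
by case: (ltnP i k) => [/le_below //|/(entry_mono (expected p))]; apply: leq_trans.
Qed.

Lemma run_inv_step c c' : run_inv c -> step automaton w c = Some c' -> run_inv c'.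
Proof.
case: c => [[v|j] [|p]].
- move=> _ [<-]; rewrite -(@entry_bottom n l ord0).
  have [m0|m_gt0] := posnP m; first by right; split; rewrite ?m0 //; apply: rank_bounded0.
  by apply: (run_inv_enter (p := 0)) => //; apply: rank_bounded0.
- case=> [[lt_pm bounded le_letter]|[-> _ _]]; last by rewrite /step tape_right_end.
  rewrite step_letter //.
  case: transition_plusP => //= [all_le|j' le_upto _] [<-]; rewrite -?expected_succ; last first.
    by split=> // i /le_upto; apply: le_letter.
  have bounded' := rank_bounded_succ bounded (fun i => le_letter i (all_le i)).
  move: lt_pm; rewrite leq_eqVlt => /orP[/eqP eq_pm|lt_pm']; first by right; rewrite -eq_pm.
  by apply: (@run_inv_enter p.+1 ord0) => // i; rewrite ltn0.
- by rewrite /step.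
- case=> lt_pm bounded le_letter; rewrite step_letter ?(ltnW lt_pm) // => -[<-].
  by rewrite -expected_succ; apply: run_inv_enter => // i; apply: le_letter.
Qed.

Lemma run_inv_reachable c : reachable automaton w c -> run_inv c.
Proof. exact: (@reachable_ind _ _ automaton w run_inv I run_inv_step). Qed.

Lemma accepts_size_ge : accepts automaton w -> N.-1 <= m.
Proof.
case/acceptsP => q /run_inv_reachable inv_q; rewrite inE => /eqP def_q.
move: inv_q; rewrite def_q => -[[]|[_ bounded top_entry]]; first by rewrite ltnn.
by rewrite -(rank_top n l) -(entry0_top (esym top_entry)); apply: bounded.
Qed.

(* Each return trip to the previous letter strictly increases the + state, which
   bounds the number of trips by [K]. *)
Lemma reachable_next p (v : 'I_K) : p < m -> letter p.+1 = expected p ->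
  entry (letter p.+1) ord0 <= v -> reachable automaton w (inl v, p.+1) ->
  reachable automaton w (inl (entry (expected p.+1) ord0), p.+2).
Proof.
move=> lt_pm def_letter; have [d] := ubnP (K - v); elim: d v => // d IHd v lt_vd ge_v reach_v.
move: (step_letter (inl v) lt_pm); case: transition_plusP => [lt_v0|_|j _ lt_vj] step_v.
- by move: lt_v0; rewrite ltnNge ge_v.
- exact: reachable_step reach_v step_v.
have reach_j := reachable_step reach_v step_v.
case: p lt_pm def_letter ge_v {step_v reach_v} IHd reach_j lt_vj => [|p] lt_pm def_letter ge_v IHd reach_j lt_vj.
  by move: lt_vj; rewrite def_letter entry_bottom.
have := step_letter (inr j) (ltnW lt_pm); rewrite /= -expected_succ -def_letter.
move=> /(reachable_step reach_j) reach_next; apply: IHd reach_next; last exact: entry_mono.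
by move: lt_vd lt_vj (ltn_ord (entry (letter p.+2) (lift ord0 j))); lia.
Qed.

End Run.

Definition witness : seq Sigma := mkseq (fun t => iter t succ (bottom n l)) N.-1.

Lemma letter_witness p : p < N.-1 -> letter witness p.+1 = iter p succ (bottom n l).
Proof. by move=> lt_p; rewrite /letter nth_mkseq. Qed.

Lemma expected_witness p : p <= N.-1 -> expected witness p = iter p succ (bottom n l).
Proof. by case: p => [//|p] lt_p; rewrite expected_succ letter_witness. Qed.

Lemma reachable_witness p : p <= N.-1 ->
  reachable automaton witness (inl (entry (expected witness p) ord0), p.+1).
Proof.
elim: p => [_|p IHp lt_p]; first by exists 1; rewrite /= entry_bottom.
have def_letter : letter witness p.+1 = expected witness p.
  by rewrite letter_witness // expected_witness // ltnW.
apply: reachable_next (IHp (ltnW lt_p)); rewrite ?size_mkseq ?def_letter //.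
Qed.

Lemma accepts_witness : accepts automaton witness.
Proof.
apply/acceptsP; exists (inl (entry (expected witness N.-1) ord0)).
  by have := reachable_witness (leqnn _); rewrite size_mkseq.
by rewrite expected_witness // iter_succ_top entry_top inE.
Qed.

Definition plus_states : {set state} := [set inl v | v : 'I_K].
Definition minus_states : {set state} := [set inr j | j : 'I_l].

Lemma card_plus_states : #|plus_states| = K.
Proof. by rewrite card_imset ?card_ord // => v v' [->]. Qed.

Lemma card_minus_states : #|minus_states| = l.
Proof. by rewrite card_imset ?card_ord // => j j' [->]. Qed.

Lemma automaton_dir_determinate : dir_determinate_wrt automaton plus_states minus_states.
Proof.
have plus_v v : inl v \in plus_states by apply: imset_f.
have minus_j j : inr j \in minus_states by apply: imset_f.
split.
- by apply/setP => -[v|j]; rewrite !inE ?plus_v ?minus_j ?orbT.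
- by rewrite -setI_eq0; apply/eqP/setP => -[v|j]; rewrite !inE;
    apply/andP => -[/imsetP[? _ ?] /imsetP[? _ ?]].
- move=> [v|j] [||x] r d //; first by case=> <- <-.
    by case: transition_plusP => // [_|j _ _] [<- <-].
  by case=> <- <-.
Qed.

End Automaton.

Theorem theorem3 (k l : nat) (hk : 2 <= k) :
  exists (Sigma Q : finType) (A : TwoDFA Sigma Q) (Qp Qm : {set Q}),
    [/\ dir_determinate_wrt A Qp Qm, #|Qp| = k, #|Qm| = l,
        (exists w, accepts A w) &
        (exists w, accepts A w /\ size w = 'C(k + l, l.+1) - 1) /\
        (forall w, accepts A w -> 'C(k + l, l.+1) - 1 <= size w)].
Proof.
case: k hk => [//|n] _.
have card_Sigma : 'C(n.+1 + l, l.+1) = #|{: sorted_tuple n l}|.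
  by rewrite card_sorted_tuple addSn -addnS addnC.
exists (sorted_tuple n l), (state n l), (automaton n l), (plus_states n l), (minus_states n l).
split.
- exact: automaton_dir_determinate.
- exact: card_plus_states.
- exact: card_minus_states.
- by exists (witness n l); apply: accepts_witness.
rewrite card_Sigma subn1; split.
  by exists (witness n l); rewrite size_mkseq; split; first exact: accepts_witness.
by move=> w; apply: accepts_size_ge.
Qed.
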